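(* There is a constant $c$ such that for all terms $t,u$, if $t\to^*_X u$ where $X=\{(\mathrm{R3}^{\mathfrak n}),(\mathrm{R4}),(\mathrm{R7}),(\mathrm{R6}),(\mathrm{R8})\}$, then the number of steps of the reduction sequence is at most $c\cdot|t|$, i.e. it is $O(|t|)$.
   Context: SYNTAX. Fix a finite set $\mathcal F$ of function symbols, each with an arity, containing a binary symbol for multiplication, written infix $t\cdot u$. Variables are annotated: an exponential variable $x^{!A}$ ($A$ a type) or a linear variable $x^{\mathsf R}$. Values: $v::=x\mid \underline r\ (r\in\mathbb R)\mid \lambda x.t\mid\langle v_1,v_2\rangle$ (the $\underline r$ are numerals). Terms: $t,u::=v\mid tu\mid\langle t,u\rangle\mid t[\langle x,y\rangle\leftarrow u]\mid t[x\leftarrow u]\mid t+u\mid f(t_1,\dots,t_k)$ with $f\in\mathcal F$ of arity $k$. $\lambda x.t$ binds $x$ in $t$; the explicit substitution $t[x\leftarrow u]$ binds $x$ in $t$; $t[\langle x,y\rangle\leftarrow u]$ binds $x,y$ in $t$. Terms are up to $\alpha$-equivalence; $\mathrm{fv}(t)$ is the set of free variables. $|t|$ (size) is the number of symbols occurring in $t$. REDUCTION. A (one-hole) context $\mathsf C$ is a term with one occurrence of a hole $\{\cdot\}$; $\mathsf C\{t\}$ fills it, possibly capturing variables. A substitution context is $\alpha=\{\cdot\}[p_1\leftarrow t_1]\cdots[p_n\leftarrow t_n]$ ($n\ge0$, each $p_i$ a variable or a pair of variables); $t\alpha$ denotes $\alpha\{t\}$. The rules: (R3$^{\mathfrak n}$)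 $\mathsf C\{x\}[x^{!A}\leftarrow \underline r\alpha]\to\mathsf C\{\underline r\}[x^{!A}\leftarrow \underline r]\alpha$ for $\mathsf C$ not binding $x$ and $\underline r$ a numeral; (R4) $t[x^{!A}\leftarrow v\alpha]\to t\alpha$ if $v$ is a value and $x\notin\mathrm{fv}(t)$; (R6) $\underline r\alpha+\underline q\beta\to\underline{r+q}\,\alpha\beta$; (R7) $\langle t_1,t_2\rangle\alpha+\langle u_1,u_2\rangle\beta\to\langle t_1+u_1,t_2+u_2\rangle\alpha\beta$; (R8) $\underline r\alpha\cdot\underline q\beta\to\underline{rq}\,\alpha\beta$. For a set $X$ of rules, $\to_X$ is the closure under all contexts of the union of the rules in $X$, and $\to^*_X$ its reflexive–transitive closure. *)

From Stdlib Require Import Reals List Arith.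
Import ListNotations.


(* Variable annotations: linear x^R, or exponential x^{!A} for a type A. *)
Inductive kind (Ty : Type) : Type :=
| Lin : kind Ty
| Exp : Ty -> kind Ty.
Arguments Lin {Ty}.
Arguments Exp {Ty} A.

(* Terms in de Bruijn form (alpha-equivalence is built in).  Binder
   annotations are carried by the binders.
   - Lam k t           : \x^k. t          (x is index 0 in t)
   - LetPair kx ky t u : t[<x,y> <- u]    (y is index 0, x is index 1 in t)
   - ES k t u          : t[x^k <- u]      (x is index 0 in t)
   - Fun f ts          : f(t_1,...,t_k)   (arity enforced by [wf]) *)
Inductive term (Ty F : Type) : Type :=
| Var : nat -> term Ty F
| Num : R -> term Ty F
| Lam : kind Ty -> term Ty F -> term Ty F
| App : term Ty F -> term Ty F -> term Ty F
| Pair : term Ty F -> term Ty F -> term Ty F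
| LetPair : kind Ty -> kind Ty -> term Ty F -> term Ty F -> term Ty F
| ES : kind Ty -> term Ty F -> term Ty F -> term Ty F
| Plus : term Ty F -> term Ty F -> term Ty F
| Fun : F -> list (term Ty F) -> term Ty F.
Arguments Var {Ty F} n.
Arguments Num {Ty F} r.
Arguments Lam {Ty F} k t.
Arguments App {Ty F} t u.
Arguments Pair {Ty F} t u.
Arguments LetPair {Ty F} kx ky t u.
Arguments ES {Ty F} k t u.
Arguments Plus {Ty F} t u.
Arguments Fun {Ty F} f ts.

Section Syntax.
Variables (Ty F : Type).
Notation term := (term Ty F).

Fixpoint wf (arity : F -> nat) (t : term) : Prop :=
  match t with
  | Var _ | Num _ => True
  | Lam _ t => wf arity t
  | App t u | Pair t u | LetPair _ _ t u | ES _ t u | Plus t u =>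
      wf arity t /\ wf arity u
  | Fun f ts => length ts = arity f /\
      (fix wfl (l : list term) : Prop :=
         match l with nil => True | t :: l => wf arity t /\ wfl l end) ts
  end.

(* size = number of symbols (each binder counts its bound variables) *)
Fixpoint size (t : term) : nat :=
  match t with
  | Var _ | Num _ => 1
  | Lam _ t => 2 + size t
  | App t u | Pair t u | Plus t u => 1 + size t + size u
  | ES _ t u => 2 + size t + size u
  | LetPair _ _ t u => 3 + size t + size u
  | Fun f ts => 1 + (fix sz (l : list term) : nat :=
                       match l with nil => 0 | t :: l => size t + sz l end) ts
  end.

Inductive is_value : term -> Prop :=
| VVar n : is_value (Var n)
| VNum r : is_value (Num r)
| VLam k t : is_value (Lam k t)
| VPair v1 v2 : is_value v1 -> is_value v2 -> is_value (Pair v1 v2).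

Fixpoint lift (d c : nat) (t : term) : term :=
  match t with
  | Var n => if c <=? n then Var (n + d) else Var n
  | Num r => Num r
  | Lam k t => Lam k (lift d (S c) t)
  | App t u => App (lift d c t) (lift d c u)
  | Pair t u => Pair (lift d c t) (lift d c u)
  | LetPair kx ky t u => LetPair kx ky (lift d (2 + c) t) (lift d c u)
  | ES k t u => ES k (lift d (S c) t) (lift d c u)
  | Plus t u => Plus (lift d c t) (lift d c u)
  | Fun f ts => Fun f (map (lift d c) ts)
  end.

(* remove the (unused) index c: decrement indices > c *)
Fixpoint lower (c : nat) (t : term) : term :=
  match t with
  | Var n => if c <? n then Var (n - 1) else Var n
  | Num r => Num r
  | Lam k t => Lam k (lower (S c) t)
  | App t u => App (lower c t) (lower c u)
  | Pair t u => Pair (lower c t) (lower c u)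
  | LetPair kx ky t u => LetPair kx ky (lower (2 + c) t) (lower c u)
  | ES k t u => ES k (lower (S c) t) (lower c u)
  | Plus t u => Plus (lower c t) (lower c u)
  | Fun f ts => Fun f (map (lower c) ts)
  end.

Fixpoint occurs (c : nat) (t : term) : Prop :=
  match t with
  | Var n => n = c
  | Num _ => False
  | Lam _ t => occurs (S c) t
  | App t u | Pair t u | Plus t u => occurs c t \/ occurs c u
  | LetPair _ _ t u => occurs (2 + c) t \/ occurs c u
  | ES _ t u => occurs (S c) t \/ occurs c u
  | Fun f ts => (fix occl (l : list term) : Prop :=
                   match l with nil => False | t :: l => occurs c t \/ occl l end) ts
  end.

(* substitution contexts: entries [x <- u] or [<x,y> <- u];
   a substitution context is a list of entries, OUTERMOST FIRST *)
Inductive sentry : Type :=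
| SX : kind Ty -> term -> sentry
| SP : kind Ty -> kind Ty -> term -> sentry.

Definition wrap (e : sentry) (t : term) : term :=
  match e with
  | SX k u => ES k t u
  | SP kx ky u => LetPair kx ky t u
  end.

Definition nb (e : sentry) : nat := match e with SX _ _ => 1 | SP _ _ _ => 2 end.

Fixpoint plug (al : list sentry) (t : term) : term :=
  match al with nil => t | e :: al => wrap e (plug al t) end.

Fixpoint nbs (al : list sentry) : nat :=
  match al with nil => 0 | e :: al => nb e + nbs al end.

Definition lift_entry (d c : nat) (e : sentry) : sentry :=
  match e with
  | SX k u => SX k (lift d c u)
  | SP kx ky u => SP kx ky (lift d c u)
  end.

Fixpoint lift_sctx (d c : nat) (al : list sentry) : list sentry :=
  match al with
  | nil => nil
  | e :: al => lift_entry d c e :: lift_sctx d (c + nb e) al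
  end.

(* t alpha beta  (alpha innermost, beta outermost): the entries of alpha move
   under the binders of beta *)
Definition sapp (al be : list sentry) : list sentry :=
  be ++ lift_sctx (nbs be) 0 al.

Inductive ctx : Type :=
| Hole : ctx
| CLam : kind Ty -> ctx -> ctx
| CAppL : ctx -> term -> ctx
| CAppR : term -> ctx -> ctx
| CPairL : ctx -> term -> ctx
| CPairR : term -> ctx -> ctx
| CLetPairL : kind Ty -> kind Ty -> ctx -> term -> ctx
| CLetPairR : kind Ty -> kind Ty -> term -> ctx -> ctx
| CESL : kind Ty -> ctx -> term -> ctx
| CESR : kind Ty -> term -> ctx -> ctx
| CPlusL : ctx -> term -> ctx
| CPlusR : term -> ctx -> ctx
| CFun : F -> list term -> ctx -> list term -> ctx.

Fixpoint fill (C : ctx) (t : term) : term :=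
  match C with
  | Hole => t
  | CLam k C => Lam k (fill C t)
  | CAppL C u => App (fill C t) u
  | CAppR u C => App u (fill C t)
  | CPairL C u => Pair (fill C t) u
  | CPairR u C => Pair u (fill C t)
  | CLetPairL kx ky C u => LetPair kx ky (fill C t) u
  | CLetPairR kx ky u C => LetPair kx ky u (fill C t)
  | CESL k C u => ES k (fill C t) u
  | CESR k u C => ES k u (fill C t)
  | CPlusL C u => Plus (fill C t) u
  | CPlusR u C => Plus u (fill C t)
  | CFun f l1 C l2 => Fun f (l1 ++ fill C t :: l2)
  end.

Fixpoint depth (C : ctx) : nat :=
  match C with
  | Hole => 0
  | CLam _ C => S (depth C)
  | CLetPairL _ _ C _ => 2 + depth C
  | CESL _ C _ => S (depth C)
  | CAppL C _ | CAppR _ C | CPairL C _ | CPairR _ C | CLetPairR _ _ _ C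
  | CESR _ _ C | CPlusL C _ | CPlusR _ C | CFun _ _ C _ => depth C
  end.

(* root rules R3^n, R4, R6, R7, R8; [mul] is the multiplication symbol *)
Inductive rule (mul : F) : term -> term -> Prop :=
| R3n : forall (A : Ty) (C : ctx) (al : list sentry) (r : R),
    rule mul (ES (Exp A) (fill C (Var (depth C))) (plug al (Num r)))
             (plug al (lift (nbs al) 0 (ES (Exp A) (fill C (Num r)) (Num r))))
| R4 : forall (A : Ty) (t v : term) (al : list sentry),
    is_value v -> ~ occurs 0 t ->
    rule mul (ES (Exp A) t (plug al v)) (plug al (lift (nbs al) 0 (lower 0 t)))
| R6 : forall (al be : list sentry) (r q : R),
    rule mul (Plus (plug al (Num r)) (plug be (Num q)))
             (plug (sapp al be) (Num (r + q)%R))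
| R7 : forall (al be : list sentry) (t1 t2 u1 u2 : term),
    rule mul (Plus (plug al (Pair t1 t2)) (plug be (Pair u1 u2)))
             (plug (sapp al be)
                (Pair (Plus (lift (nbs be) (nbs al) t1) (lift (nbs al) 0 u1))
                      (Plus (lift (nbs be) (nbs al) t2) (lift (nbs al) 0 u2))))
| R8 : forall (al be : list sentry) (r q : R),
    rule mul (Fun mul [plug al (Num r); plug be (Num q)])
             (plug (sapp al be) (Num (r * q)%R)).

Definition step (mul : F) (t u : term) : Prop :=
  exists (C : ctx) (t0 u0 : term), rule mul t0 u0 /\ t = fill C t0 /\ u = fill C u0.

Inductive nsteps (mul : F) : nat -> term -> term -> Prop :=
| ns0 : forall t, nsteps mul 0 t t
| nsS : forall n t u v, step mul t u -> nsteps mul n u v -> nsteps mul (S n) t v.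

End Syntax.

Arguments wf {Ty F} arity t.
Arguments size {Ty F} t.
Arguments step {Ty F} mul t u.
Arguments nsteps {Ty F} mul n t u.
Arguments rule {Ty F} mul _ _.

(* Every rule strictly decreases a weight that counts the symbols of a term,
   except that variables and pairs count twice.  R3^n trades a variable for a
   numeral, R4 erases a substitution, R6 and R8 merge two numerals into one,
   and R7 pays for its extra [+] with a pair constructor; substitution
   contexts are only moved around and de Bruijn shifting preserves weights.
   Since the weight is at most twice the size, a reduction sequence from [t]
   has at most [2 * size t] steps. *)
From Pilot Require Import Defs.
From Stdlib Require Import List Arith Lia.

Arguments lift {Ty F} d c t.
Arguments lower {Ty F} c t.
Arguments plug {Ty F} al t.
Arguments nbs {Ty F} al.
Arguments lift_sctx {Ty F} d c al.
Arguments sapp {Ty F} al be.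
Arguments fill {Ty F} C t.

Section Weight.
Variables Ty F : Type.
Notation term := (term Ty F).

Section TermInd.
Variable P : term -> Prop.
Hypotheses
  (HVar : forall n, P (Var n))
  (HNum : forall r, P (Num r))
  (HLam : forall k t, P t -> P (Lam k t))
  (HApp : forall t u, P t -> P u -> P (App t u))
  (HPair : forall t u, P t -> P u -> P (Pair t u))
  (HLetPair : forall kx ky t u, P t -> P u -> P (LetPair kx ky t u))
  (HES : forall k t u, P t -> P u -> P (ES k t u))
  (HPlus : forall t u, P t -> P u -> P (Plus t u))
  (HFun : forall f ts, Forall P ts -> P (Fun f ts)).

Fixpoint term_nested_ind (t : term) : P t :=
  match t with
  | Var n => HVar n
  | Num r => HNum r
  | Lam k t => HLam k t (term_nested_ind t)
  | App t u => HApp t u (term_nested_ind t) (term_nested_ind u)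
  | Pair t u => HPair t u (term_nested_ind t) (term_nested_ind u)
  | LetPair kx ky t u => HLetPair kx ky t u (term_nested_ind t) (term_nested_ind u)
  | ES k t u => HES k t u (term_nested_ind t) (term_nested_ind u)
  | Plus t u => HPlus t u (term_nested_ind t) (term_nested_ind u)
  | Fun f ts => HFun f ts
      ((fix all_ind (l : list term) : Forall P l :=
          match l with
          | nil => Forall_nil _
          | t :: l => Forall_cons _ (term_nested_ind t) (all_ind l)
          end) ts)
  end.
End TermInd.

Fixpoint weight (t : term) : nat :=
  match t with
  | Var _ => 2
  | Num _ => 1
  | Lam _ t => 2 + weight t
  | App t u | Plus t u => 1 + weight t + weight u
  | Pair t u | ES _ t u => 2 + weight t + weight u
  | LetPair _ _ t u => 3 + weight t + weight u
  | Fun _ ts => 1 + list_sum (map weight ts)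
  end.

Lemma size_Fun f (ts : list term) : size (Fun f ts) = 1 + list_sum (map size ts).
Proof. simpl; f_equal; induction ts; simpl; congruence. Qed.

Lemma weight_le_size t : weight t <= 2 * size t.
Proof.
  induction t using term_nested_ind; try (simpl; lia).
  rewrite size_Fun; simpl.
  enough (list_sum (map weight ts) <= 2 * list_sum (map size ts)) by lia.
  induction H; simpl; lia.
Qed.

Lemma list_sum_map_weight_ext g ts :
  Forall (fun t => weight (g t) = weight t) ts ->
  list_sum (map weight (map g ts)) = list_sum (map weight ts).
Proof. induction 1; simpl; congruence. Qed.

Lemma weight_lift d t : forall c, weight (lift d c t) = weight t.
Proof.
  induction t using term_nested_ind; intro c; simpl;
    try (destruct (c <=? n)); simpl; try congruence.
  f_equal; apply list_sum_map_weight_ext.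
  eapply Forall_impl; [|exact H]; auto.
Qed.

Lemma weight_lower t : forall c, weight (lower c t) = weight t.
Proof.
  induction t using term_nested_ind; intro c; simpl;
    try (destruct (c <? n)); simpl; try congruence.
  f_equal; apply list_sum_map_weight_ext.
  eapply Forall_impl; [|exact H]; auto.
Qed.

Definition entry_weight (e : sentry Ty F) : nat :=
  match e with SX _ _ _ u => 2 + weight u | Defs.SP _ _ _ _ u => 3 + weight u end.

Definition sctx_weight (al : list (sentry Ty F)) : nat :=
  list_sum (map entry_weight al).

Lemma weight_plug al t : weight (plug al t) = sctx_weight al + weight t.
Proof. induction al as [|[] al IH]; unfold sctx_weight in *; simpl in *; lia. Qed.

Lemma sctx_weight_lift d al : forall c,
  sctx_weight (lift_sctx d c al) = sctx_weight al.
Proof.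
  induction al as [|[] al IH]; intro c; unfold sctx_weight in *; simpl;
    rewrite ?IH, ?weight_lift; auto.
Qed.

Lemma sctx_weight_sapp al be :
  sctx_weight (sapp al be) = sctx_weight al + sctx_weight be.
Proof.
  unfold sapp; rewrite <- (sctx_weight_lift (nbs be) al 0).
  unfold sctx_weight; rewrite map_app, list_sum_app; lia.
Qed.

Fixpoint ctx_weight (C : ctx Ty F) : nat :=
  match C with
  | Hole _ _ => 0
  | CLam _ _ _ C => 2 + ctx_weight C
  | CAppL _ _ C u | CAppR _ _ u C | CPlusL _ _ C u | CPlusR _ _ u C =>
      1 + ctx_weight C + weight u
  | CPairL _ _ C u | CPairR _ _ u C | CESL _ _ _ C u | CESR _ _ _ u C =>
      2 + ctx_weight C + weight u
  | CLetPairL _ _ _ _ C u | CLetPairR _ _ _ _ u C => 3 + ctx_weight C + weight u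
  | CFun _ _ _ l1 C l2 =>
      1 + list_sum (map weight l1) + ctx_weight C + list_sum (map weight l2)
  end.

Lemma weight_fill C t : weight (fill C t) = ctx_weight C + weight t.
Proof.
  induction C; simpl; try lia.
  rewrite map_app, list_sum_app; simpl; lia.
Qed.

Lemma rule_weight_lt mul t u : rule mul t u -> weight u < weight t.
Proof.
  destruct 1;
    repeat progress (simpl; rewrite ?weight_plug, ?sctx_weight_sapp,
                       ?weight_lift, ?weight_lower, ?weight_fill);
    lia.
Qed.

Lemma step_weight_lt mul t u : step mul t u -> weight u < weight t.
Proof.
  intros (C & t0 & u0 & Hrule & -> & ->).
  rewrite !weight_fill; apply rule_weight_lt in Hrule; lia.
Qed.

End Weight.

Arguments weight {Ty F} t.
Arguments step_weight_lt {Ty F} mul t u.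

Lemma nsteps_le_measure {Ty F : Type} (mul : F) (m : term Ty F -> nat) :
  (forall t u, step mul t u -> m u < m t) ->
  forall n t u, nsteps mul n t u -> n <= m t.
Proof.
  intros Hdecr n t u Hn; induction Hn as [|n t u v Hstep _ IH]; [lia|].
  specialize (Hdecr _ _ Hstep); lia.
Qed.

Theorem lemma4p6 (Ty F : Type) (arity : F -> nat) (mul : F)
  (HF : exists l : list F, forall f : F, In f l)
  (Hmul : arity mul = 2) :
  exists c : nat, forall (t u : term Ty F) (n : nat),
    wf arity t -> nsteps mul n t u -> (n <= c * size t)%nat.
Proof.
  exists 2; intros t u n _ Hn.
  apply Nat.le_trans with (weight t).
  - exact (nsteps_le_measure mul weight (step_weight_lt mul) _ _ _ Hn).
  - apply weight_le_size.
Qed.
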